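(* For parameters $a,b\in[0,1]$ define $f_{a,b}:[0,1]\to[0,1]$ by $$f_{a,b}(x)=\begin{cases}(1-2a)x^2+2ax, & x\in[0,\frac13],\\ (1-2b)x^2+2bx, & x\in(\frac13,\frac23),\\ x, & x\in[\frac23,1].\end{cases}$$ For each pair $x_1,x_2$ satisfying $$x_1\in\Big(1-\tfrac{\sqrt6}{3},\tfrac13\Big),\qquad x_2\in\Big(\tfrac13,\,x_1(2-x_1)\Big),$$ there exists a unique pair $a,b$ such that $x_1,x_2$ is a 2-periodic orbit of $f_{a,b}$, i.e. $f_{a,b}(x_1)=x_2$ and $f_{a,b}(x_2)=x_1$.
   Context: A 2-periodic orbit $x_1,x_2$ here means $x_1\ne x_2$ with $f_{a,b}(x_1)=x_2$, $f_{a,b}(x_2)=x_1$. The map $f_{a,b}$ is the reduction to $[0,1]$ of the quadratic stochastic operator $x'=x^2+2p(x)xy$, $y'=2(1-p(x))xy+y^2$ (with $y=1-x$), where $p(x)=a$ for $x\le\frac13$, $b$ for $\frac13<x<\frac23$, and $\frac12$ for $x\ge\frac23$. *)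

From Stdlib Require Import Reals Lra.
Open Scope R_scope.

(* f_{a,b} on [0,1] (values outside [0,1] are irrelevant; the third branch
   is used for x >= 2/3). *)
Definition f_ab (a b x : R) : R :=
  if Rle_dec x (1/3) then (1 - 2*a) * x^2 + 2*a*x
  else if Rlt_dec x (2/3) then (1 - 2*b) * x^2 + 2*b*x
  else x.

Definition two_periodic_orbit (a b x1 x2 : R) : Prop :=
  0 <= x1 <= 1 /\ 0 <= x2 <= 1 /\ x1 <> x2 /\
  f_ab a b x1 = x2 /\ f_ab a b x2 = x1.

(* On each branch f(x) = x^2 + 2 c x (1 - x), which is affine in the
   parameter c with nonzero slope for 0 < x < 1.  So f(x) = y has exactly one
   solution c, and it lies in [0, 1] iff x^2 <= y <= x (2 - x).  The orbit
   condition splits into f(x1) = x2 on the first branch (fixing a) and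
   f(x2) = x1 on the second branch (fixing b); the bound x2 < x1 (2 - x1)
   gives x2^2 < x1 since x1 (2 - x1)^2 < 1 for x1 < 1/3. *)
From Stdlib Require Import Reals Lra.
Open Scope R_scope.

Definition branch (c x : R) : R := (1 - 2*c) * x^2 + 2*c*x.

Definition branch_param (x y : R) : R := (y - x^2) / (2*x*(1 - x)).

Lemma branch_eq_param (c x y : R) :
  0 < x < 1 -> branch c x = y <-> c = branch_param x y.
Proof.
  intros Hx. unfold branch, branch_param.
  split; intros H.
  - subst y. field. lra.
  - subst c. field. lra.
Qed.

Lemma branch_param_unit (x y : R) :
  0 < x < 1 -> x^2 <= y <= x*(2 - x) -> 0 <= branch_param x y <= 1.
Proof.
  intros Hx Hy.
  set (c := branch_param x y).
  assert (Hc : c * (2*x*(1 - x)) = y - x^2)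
    by (unfold c, branch_param; field; lra).
  assert (Hd : 0 < 2*x*(1 - x)) by nra.
  split; apply (Rmult_le_reg_r (2*x*(1 - x))); lra.
Qed.

Lemma f_ab_low (a b x : R) : x <= 1/3 -> f_ab a b x = branch a x.
Proof.
  intros Hx. unfold f_ab. destruct (Rle_dec x (1/3)); [reflexivity | lra].
Qed.

Lemma f_ab_mid (a b x : R) : 1/3 < x < 2/3 -> f_ab a b x = branch b x.
Proof.
  intros Hx. unfold f_ab.
  destruct (Rle_dec x (1/3)); [lra |].
  destruct (Rlt_dec x (2/3)); [reflexivity | lra].
Qed.

Lemma sqr_lt_of_lt_mul_two_sub (x y : R) :
  0 < x < 1/3 -> 0 < y < x*(2 - x) -> y^2 < x.
Proof.
  intros Hx Hy.
  assert (Hsq : y^2 < (x*(2 - x))^2) by nra.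
  assert (Hc : x*(2 - x)^2 < 1) by nra.
  nra.
Qed.

Theorem theorem2p5 (x1 x2 : R) :
  1 - sqrt 6 / 3 < x1 < 1/3 ->
  1/3 < x2 < x1 * (2 - x1) ->
  exists a b : R,
    (0 <= a <= 1 /\ 0 <= b <= 1 /\ two_periodic_orbit a b x1 x2) /\
    (forall a' b' : R, 0 <= a' <= 1 -> 0 <= b' <= 1 ->
       two_periodic_orbit a' b' x1 x2 -> a' = a /\ b' = b).
Proof.
  intros [Hx1_low Hx1_up] [Hx2_low Hx2_up].
  (* The bound 1 - sqrt 6 / 3 < x1 (which makes the x2-interval nonempty)
     is only needed here to get x1 > 0. *)
  assert (Hsqrt6 : sqrt 6 < 3).
  { pose proof (sqrt_sqrt 6) as H6. pose proof (sqrt_pos 6). nra. }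
  assert (Hx1 : 0 < x1 < 1/3) by lra.
  assert (Hx2 : 1/3 < x2 < 2/3) by nra.
  assert (Hx2_sqr : x2^2 < x1) by (apply sqr_lt_of_lt_mul_two_sub; lra).
  assert (Hf1 : forall a b, f_ab a b x1 = branch a x1)
    by (intros; apply f_ab_low; lra).
  assert (Hf2 : forall a b, f_ab a b x2 = branch b x2)
    by (intros; apply f_ab_mid; lra).
  exists (branch_param x1 x2), (branch_param x2 x1). split.
  - split; [apply branch_param_unit; nra |].
    split; [apply branch_param_unit; nra |].
    unfold two_periodic_orbit. rewrite Hf1, Hf2.
    repeat split; try lra; apply branch_eq_param; lra.
  - intros a' b' _ _ [_ [_ [_ [E1 E2]]]].
    rewrite Hf1 in E1. rewrite Hf2 in E2.
    split.
    + apply (branch_eq_param a' x1 x2); [lra | exact E1].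
    + apply (branch_eq_param b' x2 x1); [lra | exact E2].
Qed.
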